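(* For every positive integer $k$ there is a deterministic algorithm that uses only the ordinal profile and makes no distance queries. On every finite metric space $(X,d)$ and every consistent profile, it returns a set of centers $C\subseteq X$ with $|C|\le 2^{k-1}$ such that $\max_{x\in X} d(x,C)\le 2\cdot\mathrm{OPT}^{\mathrm{center}}_k(X,d)$.
   Context: Ordinal query model: $(X,d)$ is a finite metric space with $|X|=n$. Every point $x\in X$ reports a ranking $\pi_x$ of all points of $X$ such that $y$ is ranked above $y'$ only if $d(x,y)\le d(x,y')$ (ties broken arbitrarily); the collection $P=\{\pi_x\}_{x\in X}$ is a profile consistent with $d$. An algorithm receives $X$, $k$ and $P$ for free. Its only other access to $d$ is by querying the exact value $d(x,y)$ for pairs of its choice; each such value costs one query. For $C\subseteq X$ write $d(x,C)=\min_{c\in C}d(x,c)$. The $k$-center cost of $C$ is $\max_{x\in X}d(x,C)$, and $\mathrm{OPT}^{\mathrm{center}}_k(X,d)=\min_{C\subseteq X,|C|=k}\max_{x\in X}d(x,C)$. *)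

From HB Require Import structures.
From mathcomp Require Import all_boot all_order all_algebra all_fingroup.
From mathcomp Require Import reals ereal.
Set Implicit Arguments. Unset Strict Implicit. Unset Printing Implicit Defensive.
Import Order.TTheory GRing.Theory Num.Theory.
Local Open Scope ring_scope.

(* The finite point set X is 'I_n (n = |X|). *)

Definition is_metric (R : realType) (n : nat) (d : 'I_n -> 'I_n -> R) : Prop :=
  [/\ forall x y, 0 <= d x y,
      forall x y, d x y = 0 <-> x = y,
      forall x y, d x y = d y x &
      forall x y z, d x z <= d x y + d y z].

(* An ordinal profile: for each point x, a ranking of all points of X,
   given as a bijection  position -> point  (position 0 = top). *)
Definition profile (n : nat) := 'I_n -> {perm 'I_n}.

Definition consistent (R : realType) (n : nat) (d : 'I_n -> 'I_n -> R)
  (P : profile n) : Prop :=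
  forall (x i j : 'I_n), (i < j)%N -> d x (P x i) <= d x (P x j).

Local Open Scope ereal_scope.

(* d(x, C) = min_{c in C} d(x,c)  (+oo if C is empty). *)
Definition dist_set (R : realType) (n : nat) (d : 'I_n -> 'I_n -> R)
  (x : 'I_n) (C : {set 'I_n}) : \bar R :=
  \big[Order.min/+oo]_(c in C) (d x c)%:E.

(* k-center cost of C: max_{x in X} d(x, C)  (taken to be 0 if X is empty). *)
Definition center_cost (R : realType) (n : nat) (d : 'I_n -> 'I_n -> R)
  (C : {set 'I_n}) : \bar R :=
  \big[Order.max/0]_(x : 'I_n) dist_set d x C.

(* OPT^center_k: min over center sets of at most k points
   (equal to the minimum over |C| = k whenever k <= |X|). *)
Definition opt_center (R : realType) (n : nat) (d : 'I_n -> 'I_n -> R)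
  (k : nat) : \bar R :=
  \big[Order.min/+oo]_(C : {set 'I_n} | (#|C| <= k)%N) center_cost d C.

From mathcomp Require Import all_boot all_order all_algebra all_fingroup.
From mathcomp Require Import reals ereal.
From mathcomp Require Import lra.
Import Order.TTheory GRing.Theory Num.Theory.

Set Implicit Arguments.
Unset Strict Implicit.
Unset Printing Implicit Defensive.

(* Fix optimal centers C of radius r. The recursion keeps a cluster Y with
   center c such that every point of Y is within 2r of c or within r of one of
   a set B of optimal centers, with #|B| at most the remaining depth. Let f be
   the point of Y that c ranks last. If d(c, f) <= 2r, c covers Y within 2r.
   Otherwise f is within r of some b in B, and Y is split into the points
   ranking c above f (center c) and the others (center f). A point z of either
   half is at most as far from its new center u as from both c and f, so it
   stays within 2r of u if it was within 2r of c, and if it was served by b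
   then d(z, u) <= d(z, f) <= d(z, b) + d(b, f) <= 2r. So b leaves B at each
   level; the optimal center serving the root accounts for one more, hence
   depth k - 1 and at most 2^(k-1) centers, all chosen from the rankings. *)

Section SplitCenters.
Variables (n : nat) (P : profile n).

Definition rank (x y : 'I_n) : nat := (P x)^-1%g y.

Definition farthest (c : 'I_n) (Y : {set 'I_n}) : option 'I_n :=
  [pick f in Y | [forall z in Y, rank c z <= rank c f]].

Fixpoint split_centers (j : nat) (Y : {set 'I_n}) (c : 'I_n) : {set 'I_n} :=
  if j is j'.+1 then
    if farthest c Y is Some f then
      split_centers j' [set y in Y | rank y c <= rank y f] c
      :|: split_centers j' [set y in Y | rank y f < rank y c] f
    else [set c]
  else [set c].

Lemma card_split_centers j Y c : #|split_centers j Y c| <= 2 ^ j.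
Proof.
elim: j Y c => [|j IH] Y c /=; first by rewrite cards1.
case: (farthest c Y) => [f|]; last by rewrite cards1 expn_gt0.
apply: leq_trans (leq_card_setU _ _) _.
by rewrite expnS mul2n -addnn leq_add.
Qed.

Lemma split_centers_root j Y c : c \in split_centers j Y c.
Proof.
elim: j Y c => [|j IH] Y c /=; first exact: set11.
by case: (farthest c Y) => [f|]; rewrite ?inE ?IH ?eqxx.
Qed.

Lemma farthest_none c Y : farthest c Y = None -> Y = set0.
Proof.
move=> none; apply/setP => y; rewrite inE; apply/negP => yY.
have [f fY fmax] := @arg_maxnP _ y (mem Y) (rank c) yY.
move: none; rewrite /farthest; case: pickP => // /(_ f) /=.
rewrite [f \in Y]fY /= => /negbT/forall_inPn [z zY /negP far_z] _.
by apply: far_z; exact: fmax.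
Qed.

End SplitCenters.

Section SplitCentersCover.
Variables (R : realType) (n : nat) (d : 'I_n -> 'I_n -> R) (P : profile n).
Hypotheses (d_metric : is_metric d) (P_consistent : consistent d P).

Local Notation rank := (rank P).
Local Notation farthest := (farthest P).
Local Notation split_centers := (split_centers P).

Local Open Scope ring_scope.

Lemma dist_sym x y : d x y = d y x.
Proof. by case: d_metric. Qed.

Lemma dist_triangle x y z : d x z <= d x y + d y z.
Proof. by case: d_metric. Qed.

Lemma rank_le_dist x y z : (rank x y <= rank x z)%N -> d x y <= d x z.
Proof.
rewrite leq_eqVlt => /orP[/eqP/val_inj/perm_inj -> // | lt_yz].
by have := P_consistent x lt_yz; rewrite !permKV.
Qed.

Lemma farthest_some c Y f :
  farthest c Y = Some f -> f \in Y /\ {in Y, forall z, d c z <= d c f}.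
Proof.
rewrite /farthest; case: pickP => // g /andP[gY /forall_inP gmax] [<-].
by split=> // z /gmax; exact: rank_le_dist.
Qed.

Definition cover_invariant (r : R) (Y : {set 'I_n}) (c : 'I_n) (B : {set 'I_n}) :=
  forall y, y \in Y -> d c y <= 2 * r \/ exists2 b, b \in B & d y b <= r.

Lemma cover_invariant_split r Y c B f b u (Z : {set 'I_n}) :
  cover_invariant r Y c B -> b \in B -> d f b <= r -> {subset Z <= Y} ->
  {in Z, forall z, d z u <= d z c /\ d z u <= d z f} ->
  cover_invariant r Z u (B :\ b).
Proof.
move=> inv bB fb ZY closer z zZ; have [zc zf] := closer z zZ.
rewrite dist_sym; have [zc_le|[b' b'B zb']] := inv z (ZY z zZ).
  by left; rewrite dist_sym in zc_le; apply: le_trans zc zc_le.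
have [b'_eq|b'b] := eqVneq b' b; last by right; exists b'; rewrite // !inE b'b.
left; rewrite b'_eq in zb'; have := dist_triangle z b f; rewrite (dist_sym b f); lra.
Qed.

Lemma split_centers_cover j r Y c (B : {set 'I_n}) : (#|B| <= j)%N ->
  cover_invariant r Y c B ->
  forall y, y \in Y -> exists2 a, a \in split_centers j Y c & d y a <= 2 * r.
Proof.
elim: j Y c B => [|j IH] Y c B cardB inv y yY /=.
  move: cardB; rewrite leqn0 cards_eq0 => /eqP B0.
  have [cy|[b]] := inv y yY; last by rewrite B0 inE.
  by exists c; rewrite ?set11 // dist_sym.
case Ef: (farthest c Y) => [f|]; last by move: yY; rewrite (farthest_none Ef) inE.
have [fY far_f] := farthest_some Ef.
have [cf_le|cf_gt] := lerP (d c f) (2 * r).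
  exists c; first by rewrite inE split_centers_root.
  by rewrite dist_sym; apply: le_trans (far_f y yY) cf_le.
have [|[b bB fb]] := inv f fY; first by rewrite leNgt cf_gt.
have cardB' : (#|B :\ b| <= j)%N by move: cardB; rewrite (cardsD1 b B) bB.
have [yc|yf] := leqP (rank y c) (rank y f).
  have inv_c : cover_invariant r [set z in Y | rank z c <= rank z f]%N c (B :\ b).
    apply: cover_invariant_split inv bB fb _ _ => z; rewrite inE => /andP[zY zcf] //.
    by split; [exact: lexx | exact: rank_le_dist].
  have [|a ac ya] := IH _ c _ cardB' inv_c y; first by rewrite inE yY.
  by exists a; rewrite // inE ac.
have inv_f : cover_invariant r [set z in Y | rank z f < rank z c]%N f (B :\ b).
  apply: cover_invariant_split inv bB fb _ _ => z; rewrite inE => /andP[zY zfc] //.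
  by split; [exact/rank_le_dist/ltnW | exact: lexx].
have [|a af ya] := IH _ f _ cardB' inv_f y; first by rewrite inE yY.
by exists a; rewrite // inE af orbT.
Qed.

Lemma split_centers_cover_all r k (C : {set 'I_n}) c :
  (0 < k)%N -> (#|C| <= k)%N -> (forall y, exists2 o, o \in C & d y o <= r) ->
  forall x, exists2 a, a \in split_centers k.-1 setT c & d x a <= 2 * r.
Proof.
move=> k_gt0 cardC cover x.
have [o0 o0C co0] := cover c.
apply: (split_centers_cover (B := C :\ o0)) => //.
  by move: cardC; rewrite (cardsD1 o0 C) o0C add1n -(ltn_predK k_gt0).
move=> y _; have [o oC yo] := cover y.
have [o_eq|oo0] := eqVneq o o0; last by right; exists o; rewrite // !inE oo0.
left; rewrite o_eq in yo; have := dist_triangle c o0 y; rewrite (dist_sym o0 y); lra.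
Qed.

End SplitCentersCover.

Section CenterCost.
Variables (R : realType) (n : nat) (d : 'I_n -> 'I_n -> R).

Implicit Types C : {set 'I_n}.

Local Open Scope ereal_scope.

Lemma center_cost_ge0 C : 0 <= center_cost d C.
Proof. exact: bigmax_ge_id. Qed.

Lemma center_cost_le C (s : R) : (0 <= s)%R ->
  (forall x, exists2 c, c \in C & (d x c <= s)%R) -> center_cost d C <= s%:E.
Proof.
move=> s_ge0 cover; apply: bigmax_le => [|x _]; first by rewrite lee_fin.
by have [c cC xc] := cover x; apply: bigmin_inf cC _; rewrite lee_fin.
Qed.

Lemma cover_of_center_cost C (r : R) : center_cost d C = r%:E ->
  forall y, exists2 c, c \in C & (d y c <= r)%R.
Proof.
move=> costC y; have [/exists_inP[c cC yc]|/exists_inPn far] :=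
  boolP [exists c in C, (d y c <= r)%R]; first by exists c.
have : dist_set d y C <= r%:E.
  by rewrite -costC; exact: (le_bigmax _ (fun x => dist_set d x C)).
rewrite leNgt => /negP; case; apply/bigmin_gtP; split=> [|c cC]; first exact: ltey.
by rewrite lte_fin ltNge far.
Qed.

Lemma opt_center_attained k :
  exists2 C : {set 'I_n}, (#|C| <= k)%N & opt_center d k = center_cost d C.
Proof.
exists [arg min_(C < set0 | (#|C| <= k)%N) center_cost d C]%O.
  by case: arg_minP; rewrite ?cards0.
by apply: bigmin_eq_arg; rewrite ?cards0 // => C _; exact: leey.
Qed.

End CenterCost.

Definition ordinal_centers (k n : nat) (P : profile n) : {set 'I_n} :=
  if [pick c : 'I_n] is Some c then split_centers P k.-1 setT c else set0.

Lemma card_ordinal_centers k n (P : profile n) :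
  (#|ordinal_centers k P| <= 2 ^ k.-1)%N.
Proof.
by rewrite /ordinal_centers; case: pickP => [c _|_]; rewrite ?card_split_centers ?cards0.
Qed.

Local Open Scope ereal_scope.

Lemma ordinal_centers_cost (R : realType) n (d : 'I_n -> 'I_n -> R) (P : profile n)
    k (C : {set 'I_n}) :
  is_metric d -> consistent d P -> (0 < k)%N -> (#|C| <= k)%N ->
  center_cost d (ordinal_centers k P) <= 2%:E * center_cost d C.
Proof.
move=> d_metric P_consistent k_gt0 cardC.
case costC: (center_cost d C) (center_cost_ge0 d C) => [r| |] // r_ge0; last first.
  by rewrite gt0_muley ?lte_fin // leey.
rewrite -EFinM; apply: center_cost_le => [|x]; first by rewrite lee_fin in r_ge0; lra.
rewrite /ordinal_centers; case: pickP => [c _|no_point]; last by have := no_point x.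
exact: split_centers_cover_all k_gt0 cardC (cover_of_center_cost costC) x.
Qed.

Theorem mainTheorem2 (k : nat) (hk : (0 < k)%N) :
  exists A : forall n : nat, profile n -> {set 'I_n},
    forall (R : realType) (n : nat) (d : 'I_n -> 'I_n -> R) (P : profile n),
      is_metric d -> consistent d P ->
      (#|A n P| <= 2 ^ (k - 1))%N /\
      center_cost d (A n P) <= 2%:E * opt_center d k.
Proof.
exists (ordinal_centers k) => R n d P d_metric P_consistent.
split; first by rewrite subn1 card_ordinal_centers.
have [C cardC ->] := opt_center_attained d k.
exact: ordinal_centers_cost.
Qed.
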